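(* On the exterior Kerr spacetime (Boyer–Lindquist coordinates, region $\Delta>0$, $0<\theta<\pi$), for any constant $u_0$, the 2-form $$\frac{u_0}{\Delta}\,dr\wedge\big(a\,dt-(r^2+a^2)\,d\varphi\big)$$ is a vacuum solution of Maxwell's equations, i.e. it is closed and its current density vector vanishes.
   Context: The Kerr metric with mass $M$ and spin $a$ in Boyer–Lindquist coordinates $(t,r,\theta,\varphi)$ is $ds^2=g_{tt}dt^2+2g_{t\varphi}dt\,d\varphi+\frac{\rho^2}{\Delta}dr^2+\rho^2d\theta^2+\frac{\Sigma^2\sin^2\theta}{\rho^2}d\varphi^2$, with $g_{tt}=-1+\frac{2Mr}{\rho^2}$, $g_{t\varphi}=-\frac{2Mra\sin^2\theta}{\rho^2}$, $\rho^2=r^2+a^2\cos^2\theta$, $\Delta=r^2-2Mr+a^2$, $\Sigma^2=(r^2+a^2)^2-\Delta a^2\sin^2\theta$. For a 2-form $F$, the current density vector is $j^\nu=-\nabla_\mu F^{\mu\nu}$ with $\nabla$ the Levi-Civita connection. *)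

(* R : realType, points of the chart are row vectors
   'rV[R]_4 with coordinates (t, r, theta, phi) = indices 0,1,2,3. *)
From HB Require Import structures.
From mathcomp Require Import all_boot all_order all_algebra.
From mathcomp Require Import all_classical all_reals all_analysis.
Set Implicit Arguments. Unset Strict Implicit. Unset Printing Implicit Defensive.
Import Order.TTheory GRing.Theory Num.Theory.
Import numFieldNormedType.Exports.
Local Open Scope ring_scope.

Section Kerr.
Variable R : realType.

Definition it : 'I_4 := @Ordinal 4 0 isT.
Definition ir : 'I_4 := @Ordinal 4 1 isT.
Definition ith : 'I_4 := @Ordinal 4 2 isT.
Definition iph : 'I_4 := @Ordinal 4 3 isT.

Definition blc (x : 'rV[R]_4) (i : 'I_4) : R := x ord0 i.

Definition pd (i : 'I_4) (f : 'rV[R]_4 -> R) (x : 'rV[R]_4) : R :=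
  'D_(delta_mx ord0 i) f x.

Definition rho2 (a r th : R) : R := r ^+ 2 + a ^+ 2 * (cos th) ^+ 2.
Definition Delta (M a r : R) : R := r ^+ 2 - 2 * M * r + a ^+ 2.
Definition Sigma2 (M a r th : R) : R :=
  (r ^+ 2 + a ^+ 2) ^+ 2 - Delta M a r * a ^+ 2 * (sin th) ^+ 2.

Definition kerr_metric (M a : R) (x : 'rV[R]_4) : 'M[R]_4 :=
  let r := blc x ir in let th := blc x ith in
  \matrix_(i < 4, j < 4)
    match nat_of_ord i, nat_of_ord j with
    | 0%N, 0%N => -1 + 2 * M * r / rho2 a r th
    | 0%N, 3%N | 3%N, 0%N => - (2 * M * r * a * (sin th) ^+ 2 / rho2 a r th)
    | 1%N, 1%N => rho2 a r th / Delta M a r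
    | 2%N, 2%N => rho2 a r th
    | 3%N, 3%N => Sigma2 M a r th * (sin th) ^+ 2 / rho2 a r th
    | _, _ => 0
    end.

Definition ginv (g : 'rV[R]_4 -> 'M[R]_4) (x : 'rV[R]_4) : 'M[R]_4 := invmx (g x).

Definition Gamma (g : 'rV[R]_4 -> 'M[R]_4) (x : 'rV[R]_4) (l m n : 'I_4) : R :=
  2^-1 * \sum_(s < 4) ginv g x l s *
     (pd m (fun y => g y s n) x + pd n (fun y => g y s m) x
      - pd s (fun y => g y m n) x).

(* 2-forms are represented by their antisymmetric component matrices F_{mu nu},
   F = 1/2 F_{mu nu} dx^mu /\ dx^nu.  1-forms by component rows alpha_mu. *)
Definition dx (i : 'I_4) : 'rV[R]_4 := delta_mx ord0 i.
Definition wedge (al be : 'rV[R]_4) : 'M[R]_4 :=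
  \matrix_(i < 4, j < 4) (al ord0 i * be ord0 j - al ord0 j * be ord0 i).

Definition Fup (g : 'rV[R]_4 -> 'M[R]_4) (F : 'rV[R]_4 -> 'M[R]_4)
  (x : 'rV[R]_4) (m n : 'I_4) : R :=
  \sum_(p < 4) \sum_(q < 4) ginv g x m p * ginv g x n q * F x p q.

(* nabla_mu T^{mu nu} for the (2,0)-tensor T = F^{..} *)
Definition divF (g F : 'rV[R]_4 -> 'M[R]_4) (x : 'rV[R]_4) (n : 'I_4) : R :=
  \sum_(m < 4) (pd m (fun y => Fup g F y m n) x
    + \sum_(l < 4) Gamma g x m m l * Fup g F x l n
    + \sum_(l < 4) Gamma g x n m l * Fup g F x m l).

Definition current (g F : 'rV[R]_4 -> 'M[R]_4) (x : 'rV[R]_4) (n : 'I_4) : R :=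
  - divF g F x n.

Definition closed2 (F : 'rV[R]_4 -> 'M[R]_4) (x : 'rV[R]_4) : Prop :=
  forall l m n : 'I_4,
    pd l (fun y => F y m n) x + pd m (fun y => F y n l) x
    + pd n (fun y => F y l m) x = 0.

Definition maxF (M a u0 : R) (x : 'rV[R]_4) : 'M[R]_4 :=
  let r := blc x ir in
  (u0 / Delta M a r) *: wedge (dx ir) (a *: dx it - (r ^+ 2 + a ^+ 2) *: dx iph).

End Kerr.

(* Closedness: F_{mn} depends on r only and vanishes unless one index is r,
   so every term of (dF)_{lmn} either vanishes identically or is a pair
   d_r F_{mn} + d_r F_{nm} = d_r 0 cancelling by antisymmetry.

   Divergence: for a symmetric metric and an antisymmetric F the term
   Gamma^n_{ml} F^{ml} of nabla_m F^{mn} cancels, and the contracted symbols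
   Gamma^m_{ml} = 1/2 g^{ms} d_l g_{sm} vanish for l = t, phi (the Kerr metric
   is stationary and axisymmetric) while Gamma^m_{mr} = 2r/rho^2.  Raising the
   indices with the explicit inverse Kerr metric gives F^{rt} = -a u0/rho^2,
   F^{r phi} = -u0/(rho^2 sin^2 theta) and F^{theta n} = 0, so the divergence
   reduces to d_r F^{rn} + (2r/rho^2) F^{rn}, which vanishes since
   rho^2 F^{rn} does not depend on r. *)
From HB Require Import structures.
From mathcomp Require Import all_boot all_order all_algebra.
From mathcomp Require Import all_classical all_reals all_analysis.
From mathcomp Require Import ring lra.
Import Order.TTheory GRing.Theory Num.Theory.
Import numFieldNormedType.Exports.
Local Open Scope ring_scope.
Set Implicit Arguments. Unset Strict Implicit.

Section OneVariableDerivatives.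
Variable R : realType.
Implicit Types (f g : R -> R) (t df dg : R).

Definition has_deriv f t df : Prop := is_derive t (1 : R) f df.

Lemma deriv_cst (c t : R) : has_deriv (fun _ : R => c) t 0.
Proof. exact: is_derive_cst. Qed.

Lemma deriv_id t : has_deriv (fun h : R => h) t 1.
Proof. exact: is_derive_id. Qed.

Lemma deriv_add f g t df dg : has_deriv f t df -> has_deriv g t dg ->
  has_deriv (fun h => f h + g h) t (df + dg).
Proof. by move=> Hf Hg; apply: is_deriveD. Qed.

Lemma deriv_opp f t df : has_deriv f t df -> has_deriv (fun h => - f h) t (- df).
Proof. by move=> Hf; apply: is_deriveN. Qed.

Lemma deriv_mul f g t df dg : has_deriv f t df -> has_deriv g t dg ->
  has_deriv (fun h => f h * g h) t (f t * dg + g t * df).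
Proof. by move=> Hf Hg; apply: is_deriveM. Qed.

Lemma deriv_sqr f t df : has_deriv f t df ->
  has_deriv (fun h => f h ^+ 2) t (2 * f t * df).
Proof.
move=> Hf; rewrite (_ : (fun h => f h ^+ 2) = (fun h => f h * f h)); last first.
  by apply: funext => h; rewrite expr2.
by apply: (is_derive_eq (deriv_mul Hf Hf)); ring.
Qed.

Lemma deriv_inv f t df : f t != 0 -> has_deriv f t df ->
  has_deriv (fun h => (f h)^-1) t (- (f t) ^-2 * df).
Proof.
move=> f_neq0 Hf; have Hd : derivable f t 1 by case: Hf.
apply: DeriveDef; first exact: derivableV.
by rewrite deriveV //; case: Hf => _ ->.
Qed.

Lemma derive1_val f t df D : has_deriv f t df -> df = D -> 'D_1 f t = D.
Proof. by case=> _ -> ->. Qed.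

Lemma near_neq0 f df : has_deriv f 0 df -> f 0 != 0 ->
  \forall h \near 0, f h != 0.
Proof.
move=> [Hd _] f0_neq0.
have Hc : {for 0, continuous f}.
  exact/differentiable_continuous/derivable1_diffP.
exact: (cvgr_neq0 (f 0) Hc f0_neq0).
Qed.

End OneVariableDerivatives.

Ltac deriv_rules := repeat first
  [ apply: deriv_cst | apply: deriv_id | apply: deriv_add | apply: deriv_opp
  | apply: deriv_sqr | apply: deriv_inv | apply: deriv_mul ].

Section Coordinates.
Variable R : realType.
Implicit Types (x : 'rV[R]_4) (f : 'rV[R]_4 -> R).

Lemma ord4P (P : 'I_4 -> Prop) : P it -> P ir -> P ith -> P iph -> forall i, P i.
Proof.
move=> Pt Pr Pth Pph [[|[|[|[|k]]]] Hk] //.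
- by rewrite (_ : Ordinal Hk = it) //; apply: val_inj.
- by rewrite (_ : Ordinal Hk = ir) //; apply: val_inj.
- by rewrite (_ : Ordinal Hk = ith) //; apply: val_inj.
- by rewrite (_ : Ordinal Hk = iph) //; apply: val_inj.
Qed.

Lemma sum4 (u : 'I_4 -> R) : \sum_(i < 4) u i = u it + u ir + u ith + u iph.
Proof.
rewrite !big_ord_recl big_ord0 addr0 !addrA.
by congr (_ + _ + _ + _); congr u; apply: val_inj.
Qed.

Lemma blc_line (i j : 'I_4) (h : R) x :
  blc (h *: dx R i + x) j = (if j == i then h else 0) + blc x j.
Proof. by rewrite /blc /dx !mxE eqxx /=; case: eqP => _; rewrite ?mulr1 ?mulr0. Qed.

Lemma pd_line i f x : pd i f x = 'D_1 (fun h : R => f (h *: dx R i + x)) 0.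
Proof.
rewrite /pd /derive /= scale0r add0r.
set d := (fun _ : R => _ *: _); set d' := (fun _ : R => _ *: _).
suff -> : d = d' by [].
by apply: funext => h; rewrite /d /d' /= addr0 [_%:A]mulr1.
Qed.

Lemma pd_const_line i f x :
  (forall h, f (h *: dx R i + x) = f x) -> pd i f x = 0.
Proof.
move=> Hf; rewrite pd_line (_ : (fun h : R => _) = cst (f x)) ?derive_cst //.
by apply: funext => h; rewrite Hf.
Qed.

End Coordinates.

Section DivergenceOfAntisymmetric.
Variable R : realType.
Variables g F : 'rV[R]_4 -> 'M[R]_4.
Variable x : 'rV[R]_4.
Hypothesis g_sym : forall y i j, g y i j = g y j i.

Lemma Gamma_sym n m l : Gamma g x n m l = Gamma g x n l m.
Proof.
rewrite /Gamma; congr (_ * _); apply: eq_bigr => s _; congr (_ * _).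
rewrite (_ : (fun y => g y m l) = (fun y => g y l m)); last first.
  by apply: funext => y; rewrite g_sym.
by rewrite [X in X - _]addrC.
Qed.

Lemma Fup_anti m n : (forall i j, F x i j = - F x j i) ->
  Fup g F x m n = - Fup g F x n m.
Proof.
move=> F_anti; rewrite /Fup [in RHS]exchange_big -sumrN; apply: eq_bigr => p _.
by rewrite -sumrN; apply: eq_bigr => q _; rewrite F_anti; ring.
Qed.

(* Gamma^n_{ml} F^{ml} = 0: symmetric against antisymmetric *)
Lemma Gamma_Fup_contract0 n : (forall i j, F x i j = - F x j i) ->
  \sum_(m < 4) \sum_(l < 4) Gamma g x n m l * Fup g F x m l = 0.
Proof.
move=> F_anti; set S := (X in X = 0).
suff : S = - S by lra.
rewrite /S [in LHS]exchange_big -sumrN; apply: eq_bigr => m _.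
rewrite -sumrN; apply: eq_bigr => l _.
by rewrite Gamma_sym (Fup_anti _ _ F_anti) mulrN.
Qed.

Lemma Gamma_trace l : (forall i j, ginv g x i j = ginv g x j i) ->
  \sum_(m < 4) Gamma g x m m l =
  2^-1 * \sum_(m < 4) \sum_(s < 4) ginv g x m s * pd l (fun y => g y s m) x.
Proof.
move=> ginv_sym; rewrite /Gamma -mulr_sumr; congr (_ * _).
have swap : \sum_(m < 4) \sum_(s < 4) ginv g x m s * pd m (fun y => g y s l) x =
            \sum_(m < 4) \sum_(s < 4) ginv g x m s * pd s (fun y => g y m l) x.
  rewrite [RHS]exchange_big /=; apply: eq_bigr => m _; apply: eq_bigr => s _.
  by rewrite ginv_sym.
rewrite (eq_bigr (fun m => \sum_(s < 4) ginv g x m s * pd m (fun y => g y s l) x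
    + \sum_(s < 4) ginv g x m s * pd l (fun y => g y s m) x
    - \sum_(s < 4) ginv g x m s * pd s (fun y => g y m l) x)); last first.
  move=> m _; rewrite -big_split -sumrB; apply: eq_bigr => s _.
  by rewrite mulrBr mulrDr.
rewrite sumrB big_split /= swap; ring.
Qed.

End DivergenceOfAntisymmetric.

Section KerrMetric.
Variable R : realType.
Variables M a : R.
Implicit Types (x y : 'rV[R]_4).

Lemma kerr_sym y i j : kerr_metric M a y i j = kerr_metric M a y j i.
Proof. by rewrite !mxE; move: i j; apply: ord4P; apply: ord4P. Qed.

(* the entries of the (t, phi) block of the metric and its determinant *)
Definition kA r th : R := -1 + 2 * M * r / rho2 a r th.
Definition kB r th : R := - (2 * M * r * a * (sin th) ^+ 2 / rho2 a r th).
Definition kC r th : R := Sigma2 M a r th * (sin th) ^+ 2 / rho2 a r th.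
Definition kdet r th : R := - (Delta M a r * sin th ^+ 2).

Definition kerr_inv_mx r th : 'M[R]_4 :=
  \matrix_(i < 4, j < 4)
    match nat_of_ord i, nat_of_ord j with
    | 0%N, 0%N => kC r th / kdet r th
    | 0%N, 3%N | 3%N, 0%N => - kB r th / kdet r th
    | 1%N, 1%N => Delta M a r / rho2 a r th
    | 2%N, 2%N => 1 / rho2 a r th
    | 3%N, 3%N => kA r th / kdet r th
    | _, _ => 0
    end.

Lemma kerr_mul_inv y : Delta M a (blc y ir) != 0 -> sin (blc y ith) != 0 ->
  rho2 a (blc y ir) (blc y ith) != 0 ->
  kerr_metric M a y *m kerr_inv_mx (blc y ir) (blc y ith) = 1%:M.
Proof.
move=> HD Hs Hr.
apply/matrixP => i j; rewrite !mxE !big_ord_recl big_ord0 !mxE.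
move: i j; apply: ord4P; apply: ord4P => /=.
all: move: HD Hs Hr; move: (blc y ir) (blc y ith) => r th.
all: rewrite /kdet /kA /kB /kC /Sigma2 /Delta /rho2 cos2sin2 => HD Hs Hr.
all: rewrite /= ?mul0r ?mulr0 ?add0r ?addr0.
all: try field.
all: by rewrite ?HD ?Hs ?Hr.
Qed.

Lemma kerr_inv y : Delta M a (blc y ir) != 0 -> sin (blc y ith) != 0 ->
  rho2 a (blc y ir) (blc y ith) != 0 ->
  invmx (kerr_metric M a y) = kerr_inv_mx (blc y ir) (blc y ith).
Proof.
move=> HD Hs Hr; have H := kerr_mul_inv HD Hs Hr.
have [Hu _] := mulmx1_unit H.
by rewrite -[RHS]mul1mx -(mulVmx Hu) -mulmxA H mulmx1.
Qed.

Lemma ginv_sym y i j : ginv (kerr_metric M a) y i j = ginv (kerr_metric M a) y j i.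
Proof.
have HT : (kerr_metric M a y)^T = kerr_metric M a y.
  by apply/matrixP => p q; rewrite mxE kerr_sym.
by rewrite /ginv -[in RHS]HT -trmx_inv mxE.
Qed.

(* theta is orthogonal to the other coordinates, so g^{theta p} = 0 for
   p <> theta; this holds even where the metric is degenerate *)
Lemma ginv_theta_row y p : p != ith -> ginv (kerr_metric M a) y ith p = 0.
Proof.
move=> Hp; set K := kerr_metric M a y.
have K_col : forall k, k != ith -> K k ith = 0.
  by move=> k; rewrite mxE; move: k; apply: ord4P.
case Hu: (K \in unitmx); last first.
  rewrite /ginv invmx_out; last by rewrite inE Hu.
  by rewrite /K mxE; move: p Hp; apply: ord4P.
rewrite ginv_sym /ginv -/K.
have colE q : (invmx K *m K) q ith = invmx K q ith * rho2 a (blc y ir) (blc y ith).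
  rewrite mxE (bigD1 ith) //= big1 ?addr0; first by rewrite /K mxE.
  by move=> k Hk; rewrite K_col ?mulr0.
have E1 := colE p; have E2 := colE ith.
rewrite mulVmx // !mxE (negbTE Hp) eqxx /= in E1 E2.
have Hr : rho2 a (blc y ir) (blc y ith) != 0.
  by apply/eqP => r0; move: E2; rewrite r0 mulr0 => /eqP; rewrite oner_eq0.
by move/esym/eqP: E1; rewrite mulf_eq0 (negbTE Hr) orbF => /eqP.
Qed.

Lemma kerr_line_inv i h x : ir != i -> ith != i ->
  kerr_metric M a (h *: dx R i + x) = kerr_metric M a x.
Proof.
move=> Hr Hth; apply/matrixP => p q.
by rewrite !mxE !blc_line (negbTE Hr) (negbTE Hth) !add0r.
Qed.

Lemma Gamma_trace_killing x l : ir != l -> ith != l ->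
  \sum_(m < 4) Gamma (kerr_metric M a) x m m l = 0.
Proof.
move=> Hr Hth; rewrite Gamma_trace; last exact: ginv_sym.
rewrite big1 ?mulr0 // => m _; rewrite big1 // => s _.
by rewrite pd_const_line ?mulr0 // => h; rewrite kerr_line_inv.
Qed.

End KerrMetric.

Section RadialDerivatives.
Variable R : realType.
Variables M a : R.
Variable x : 'rV[R]_4.
Let r0 := blc x ir.
Let th0 := blc x ith.
(* Delta <> 0, sin theta <> 0 and rho^2 <> 0 at x, with Delta and rho^2
   unfolded so that they discharge the side conditions of field *)
Hypothesis HD : r0 ^+ 2 - 2 * M * r0 + a ^+ 2 != 0.
Hypothesis Hs : sin th0 != 0.
Hypothesis Hr : r0 ^+ 2 + a ^+ 2 * cos th0 ^+ 2 != 0.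

Ltac nonzero_side := by rewrite /= ?add0r ?exprMn ?mulf_neq0 ?expf_neq0 ?Hr ?HD ?Hs.
Ltac field_close := rewrite /= ?add0r ?mulr1 ?addr0 ?mulr0; field;
  rewrite ?exprMn; by rewrite ?Hr ?HD ?Hs.

Lemma pd_r_g00 : pd ir (fun y => kerr_metric M a y it it) x =
  2 * M / rho2 a r0 th0 - 2 * M * r0 * (2 * r0) / rho2 a r0 th0 ^+ 2.
Proof.
rewrite pd_line (_ : (fun h : R => _) =
  (fun h => -1 + 2 * M * (h + r0) / rho2 a (h + r0) th0)); last first.
  by apply: funext => h; rewrite mxE !blc_line /= add0r.
rewrite /rho2; apply: derive1_val; first deriv_rules.
- nonzero_side.
- field_close.
Qed.

Lemma pd_r_g03 : pd ir (fun y => kerr_metric M a y it iph) x =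
  - (2 * M * a * sin th0 ^+ 2 / rho2 a r0 th0
     - 2 * M * r0 * a * sin th0 ^+ 2 * (2 * r0) / rho2 a r0 th0 ^+ 2).
Proof.
rewrite pd_line (_ : (fun h : R => _) =
  (fun h => - (2 * M * (h + r0) * a * sin th0 ^+ 2 / rho2 a (h + r0) th0))); last first.
  by apply: funext => h; rewrite mxE !blc_line /= add0r.
rewrite /rho2; apply: derive1_val; first deriv_rules.
- nonzero_side.
- field_close.
Qed.

Lemma pd_r_g30 : pd ir (fun y => kerr_metric M a y iph it) x =
  - (2 * M * a * sin th0 ^+ 2 / rho2 a r0 th0
     - 2 * M * r0 * a * sin th0 ^+ 2 * (2 * r0) / rho2 a r0 th0 ^+ 2).
Proof. by rewrite -pd_r_g03; congr pd; apply: funext => y; apply: kerr_sym. Qed.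

Lemma pd_r_g11 : pd ir (fun y => kerr_metric M a y ir ir) x =
  2 * r0 / Delta M a r0 - rho2 a r0 th0 * (2 * r0 - 2 * M) / Delta M a r0 ^+ 2.
Proof.
rewrite pd_line (_ : (fun h : R => _) =
  (fun h => rho2 a (h + r0) th0 / Delta M a (h + r0))); last first.
  by apply: funext => h; rewrite mxE !blc_line /= add0r.
rewrite /rho2 /Delta; apply: derive1_val; first deriv_rules.
- nonzero_side.
- field_close.
Qed.

Lemma pd_r_g22 : pd ir (fun y => kerr_metric M a y ith ith) x = 2 * r0.
Proof.
rewrite pd_line (_ : (fun h : R => _) = (fun h => rho2 a (h + r0) th0)); last first.
  by apply: funext => h; rewrite mxE !blc_line /= add0r.
rewrite /rho2; apply: derive1_val; first deriv_rules.
field_close.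
Qed.

Lemma pd_r_g33 : pd ir (fun y => kerr_metric M a y iph iph) x =
  (2 * (r0 ^+ 2 + a ^+ 2) * (2 * r0) - (2 * r0 - 2 * M) * a ^+ 2 * sin th0 ^+ 2)
    * sin th0 ^+ 2 / rho2 a r0 th0
  - Sigma2 M a r0 th0 * sin th0 ^+ 2 * (2 * r0) / rho2 a r0 th0 ^+ 2.
Proof.
rewrite pd_line (_ : (fun h : R => _) =
  (fun h => Sigma2 M a (h + r0) th0 * sin th0 ^+ 2 / rho2 a (h + r0) th0)); last first.
  by apply: funext => h; rewrite mxE !blc_line /= add0r.
rewrite /rho2 /Sigma2 /Delta; apply: derive1_val; first deriv_rules.
- nonzero_side.
- field_close.
Qed.

(* Gamma^m_{mr} = d_r log (rho^2 sin theta) = 2r/rho^2 *)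
Lemma Gamma_trace_r :
  \sum_(m < 4) Gamma (kerr_metric M a) x m m ir = 2 * r0 / rho2 a r0 th0.
Proof.
rewrite Gamma_trace; last exact: ginv_sym.
rewrite /ginv kerr_inv // !sum4 pd_r_g00 pd_r_g03 pd_r_g30 pd_r_g11 pd_r_g22 pd_r_g33.
rewrite !mxE /= !mul0r ?addr0 ?add0r.
move: HD Hs Hr; rewrite /r0 /th0; move: (blc x ir) (blc x ith) => r th.
rewrite /kdet /kA /kB /kC /Sigma2 /Delta /rho2 cos2sin2 => HD' Hs' Hr'.
by field; rewrite ?HD' ?Hs' ?Hr'.
Qed.

End RadialDerivatives.

Section MaxwellField.
Variable R : realType.
Variables M a u0 : R.
Implicit Types (x y : 'rV[R]_4).

Notation F := (maxF M a u0).
Notation Fu := (Fup (kerr_metric M a) (maxF M a u0)).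

Lemma maxF_anti y i j : F y i j = - F y j i.
Proof. by rewrite !mxE; ring. Qed.

Lemma maxF_no_r y m n : m != ir -> n != ir -> F y m n = 0.
Proof. by move=> Hm Hn; rewrite !mxE eqxx (negbTE Hm) (negbTE Hn) /=; ring. Qed.

Lemma maxF_theta_row y q : F y ith q = 0.
Proof. by rewrite !mxE /=; ring. Qed.

Lemma maxF_rr y : F y ir ir = 0.
Proof. by have := maxF_anti y ir ir; lra. Qed.

Lemma maxF_line_inv i h x : ir != i -> F (h *: dx R i + x) = F x.
Proof. by move=> Hi; rewrite /maxF blc_line (negbTE Hi) add0r. Qed.

Lemma Fup_theta_row y n : Fu y ith n = 0.
Proof.
rewrite /Fup big1 // => p _; rewrite big1 // => q _.
have [->|Hp] := eqVneq p ith.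
  by rewrite maxF_theta_row mulr0.
by rewrite ginv_theta_row // !mul0r.
Qed.

(* rho^2 F^{rn}, which turns out not to depend on r *)
Definition Fr_flux (th : R) (n : 'I_4) : R :=
  match nat_of_ord n with
  | 0%N => - (a * u0)
  | 3%N => - (u0 / sin th ^+ 2)
  | _ => 0
  end.

Lemma Fup_r_row y n : Delta M a (blc y ir) != 0 -> sin (blc y ith) != 0 ->
  rho2 a (blc y ir) (blc y ith) != 0 ->
  Fu y ir n = Fr_flux (blc y ith) n / rho2 a (blc y ir) (blc y ith).
Proof.
move=> HD Hs Hr; rewrite /Fup /ginv kerr_inv //.
rewrite !big_ord_recl !big_ord0 !mxE /=.
move: HD Hs Hr; move: (blc y ir) (blc y ith) => r th.
rewrite /kdet /kA /kB /kC /Sigma2 /Delta /rho2 cos2sin2 => HD Hs Hr.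
by move: n; apply: ord4P; rewrite /Fr_flux /=; field; rewrite ?HD ?Hs ?Hr.
Qed.

Lemma pd_Fup_killing i x m n : ir != i -> ith != i ->
  pd i (fun y => Fu y m n) x = 0.
Proof.
move=> Hr Hth; apply: pd_const_line => h.
by rewrite /Fup /ginv kerr_line_inv // maxF_line_inv.
Qed.

Section AtAPoint.
Variable x : 'rV[R]_4.
Let r0 := blc x ir.
Let th0 := blc x ith.
Hypothesis HD : Delta M a r0 != 0.
Hypothesis Hs : sin th0 != 0.
Hypothesis Hr : rho2 a r0 th0 != 0.

Lemma divF_radial n :
  divF (kerr_metric M a) F x n =
  pd ir (fun y => Fu y ir n) x + 2 * r0 / rho2 a r0 th0 * Fu x ir n.
Proof.
rewrite /divF !big_split /= Gamma_Fup_contract0; first last.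
- exact: maxF_anti.
- exact: kerr_sym.
rewrite addr0 sum4 (pd_Fup_killing _ _ _ (i := it)) //.
rewrite (pd_Fup_killing _ _ _ (i := iph)) //.
rewrite (_ : pd ith _ x = 0); last by apply: pd_const_line => h; rewrite !Fup_theta_row.
rewrite add0r !addr0; congr (_ + _).
rewrite exchange_big /= (eq_bigr (fun l => (\sum_(m < 4) Gamma (kerr_metric M a) x m m l)
    * Fu x l n)); last by move=> l _; rewrite mulr_suml.
rewrite sum4 (Gamma_trace_killing _ _ _ (l := it)) //.
rewrite (Gamma_trace_killing _ _ _ (l := iph)) // Fup_theta_row Gamma_trace_r //.
by rewrite !mul0r mulr0 add0r !addr0.
Qed.

Lemma Fup_r_near n : \forall h \near 0,
  Fu (h *: dx R ir + x) ir n = Fr_flux th0 n / rho2 a (h + r0) th0.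
Proof.
have line_r h : blc (h *: dx R ir + x) ir = h + r0 by rewrite blc_line eqxx.
have line_th h : blc (h *: dx R ir + x) ith = th0 by rewrite blc_line /= add0r.
have ND : \forall h \near 0, Delta M a (h + r0) != 0.
  by apply: near_neq0; [rewrite /Delta; deriv_rules | rewrite /= add0r].
have NR : \forall h \near 0, rho2 a (h + r0) th0 != 0.
  by apply: near_neq0; [rewrite /rho2; deriv_rules | rewrite /= add0r].
near=> h; rewrite Fup_r_row ?line_r ?line_th //; by near: h.
Unshelve. all: by end_near.
Qed.

Lemma pd_r_Fup n :
  pd ir (fun y => Fu y ir n) x = - (2 * r0 / rho2 a r0 th0 * Fu x ir n).
Proof.
rewrite pd_line (near_eq_derive (1 : R) (Fup_r_near n)) Fup_r_row //.
rewrite /rho2; apply: derive1_val; first deriv_rules.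
- by rewrite /= add0r.
- move: Hr; rewrite /rho2 => Hr'.
  by rewrite -/r0 -/th0 /= add0r; field; rewrite exprMn Hr'.
Qed.

Lemma divF_zero n : divF (kerr_metric M a) F x n = 0.
Proof. by rewrite divF_radial pd_r_Fup addNr. Qed.

End AtAPoint.

Section Closedness.
Variable x : 'rV[R]_4.
Hypothesis HD : Delta M a (blc x ir) != 0.

Lemma maxF_r_derivable m n :
  exists d, has_deriv (fun h => F (h *: dx R ir + x) m n) 0 d.
Proof.
rewrite (_ : (fun h => _) = (fun h => u0 / Delta M a (h + blc x ir) *
   (dx R ir ord0 m * (a * dx R it ord0 n - ((h + blc x ir) ^+ 2 + a ^+ 2) * dx R iph ord0 n)
  - dx R ir ord0 n * (a * dx R it ord0 m - ((h + blc x ir) ^+ 2 + a ^+ 2) * dx R iph ord0 m)))).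
  rewrite /Delta; eexists; deriv_rules.
  by move: HD; rewrite /Delta /= add0r.
by apply: funext => h; rewrite /maxF !mxE blc_line eqxx.
Qed.

Lemma pd_r_maxF_anti m n :
  pd ir (fun y => F y m n) x + pd ir (fun y => F y n m) x = 0.
Proof.
have [d Hd] := maxF_r_derivable m n.
rewrite (_ : (fun y => F y n m) = (fun y => - F y m n)); last first.
  by apply: funext => y; rewrite maxF_anti.
by rewrite !pd_line (derive1_val Hd erefl) (derive1_val (deriv_opp Hd) erefl) addrN.
Qed.

Lemma pd_maxF_transverse l m n : l != ir -> pd l (fun y => F y m n) x = 0.
Proof. by move=> Hl; apply: pd_const_line => h; rewrite maxF_line_inv // eq_sym. Qed.

Lemma pd_maxF_no_r l m n : m != ir -> n != ir -> pd l (fun y => F y m n) x = 0.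
Proof. by move=> Hm Hn; apply: pd_const_line => h; rewrite !maxF_no_r. Qed.

Lemma pd_maxF_rr l : pd l (fun y => F y ir ir) x = 0.
Proof. by apply: pd_const_line => h; rewrite !maxF_rr. Qed.

(* dF = 0: in each case every term vanishes or they cancel in pairs *)
Lemma maxF_closed : closed2 F x.
Proof.
move=> l m n.
have [->|Hl] := eqVneq l ir; have [->|Hm] := eqVneq m ir;
  have [->|Hn] := eqVneq n ir.
- by rewrite !pd_maxF_rr !addr0.
- by rewrite pd_maxF_rr addr0 pd_r_maxF_anti.
- by rewrite pd_maxF_rr addr0 pd_r_maxF_anti.
- by rewrite pd_maxF_no_r // !pd_maxF_transverse // !addr0.
- by rewrite pd_maxF_rr add0r pd_r_maxF_anti.
- by rewrite pd_maxF_transverse // pd_maxF_no_r // pd_maxF_transverse // !addr0.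
- by rewrite pd_maxF_transverse // pd_maxF_transverse // pd_maxF_no_r // !addr0.
- by rewrite !pd_maxF_transverse // !addr0.
Qed.

End Closedness.

End MaxwellField.

Unset Implicit Arguments.

Theorem mainTheorem13 (R : realType) (M a u0 : R) (x : 'rV[R]_4) :
  0 < Delta M a (blc x ir) ->
  0 < blc x ith < pi ->
  rho2 a (blc x ir) (blc x ith) != 0 ->
  closed2 (maxF M a u0) x /\
  (forall n : 'I_4, current (kerr_metric M a) (maxF M a u0) x n = 0).
Proof.
move=> HDpos Hth Hr.
have HD : Delta M a (blc x ir) != 0 by rewrite gt_eqF.
have Hs : sin (blc x ith) != 0 by rewrite gt_eqF // sin_gt0_pi.
split; first exact: maxF_closed.
by move=> n; rewrite /current divF_zero // oppr0.
Qed.
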